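(* Fix $K\ge1$, points $\mathbf{w}_1,\dots,\mathbf{w}_K\in\mathbb{R}^2$ and constants $H>0$, $\rho_0>0$, $\sigma^2>0$, $r^*>0$, $P_c\ge0$, $E_1,\dots,E_K>0$, $\tilde P_1,\dots,\tilde P_K>0$. For $\mathbf{q}\in\mathbb{R}^2$ write $d_k=\sqrt{\|\mathbf{q}-\mathbf{w}_k\|^2+H^2}$ and $h_k=\rho_0/d_k^2$. Problem (P1): minimize $\zeta$ over $(\zeta,\mathbf{q},\mathbf{p},\pi)$, $\zeta\in\mathbb{R}$, $\mathbf q\in\mathbb{R}^2$, $\mathbf p\in\mathbb{R}^K$, $\pi$ a permutation of $\{1,\dots,K\}$, subject to, for all $m$: $p_{\pi(m)}+P_c\le\zeta E_{\pi(m)}$; $0\le p_{\pi(m)}\le\tilde P_{\pi(m)}$; $\log_2\big(1+\frac{p_{\pi(m)}h_{\pi(m)}}{\sum_{n=m+1}^Kp_{\pi(n)}h_{\pi(n)}+\sigma^2}\big)\ge r^*$; and $d_{\pi(1)}\le\dots\le d_{\pi(K)}$. Problem (P2): minimize $\zeta$ over $(\zeta,\mathbf{q},\mathbf{p},\boldsymbol\alpha)$ with $\boldsymbol\alpha=(\alpha_{k,j})_{k,j=1}^K$, subject to, for all $k$: $p_k+P_c\le\zeta E_k$; $0\le p_k\le\tilde P_k$; $\log_2\big(1+\frac{p_kh_k}{\sum_{j\ne k}\alpha_{k,j}p_jh_j+\sigma^2}\big)\ge r^*$; for all $k\ne j$: $\alpha_{k,j}=0$ if $d_k>d_j$, $\alpha_{k,j}=1$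 if $d_k<d_j$, $\alpha_{k,j}\in\{0,1\}$ if $d_k=d_j$; $\alpha_{k,k}=0$; $\alpha_{k,j}+\alpha_{j,k}=1$ for $k\ne j$; $\alpha_{k,j}+\alpha_{j,i}-1\le\alpha_{k,i}$ for all $k,j,i$. Then the optimal values of (P1) and (P2) are equal.
   Context: (P1) models maximizing the minimum device lifetime $E_k/(p_k+P_c)$ (via $\zeta=1/\text{lifetime}$) in uplink NOMA to a UAV at horizontal position $\mathbf q$ and altitude $H$ with permutation decoding order $\pi$; (P2) is the same with binary decoding-order variables ($\alpha_{k,j}=1$: device $k$ decoded before device $j$). Optimal value means the infimum of $\zeta$ over the feasible set. *)

From HB Require Import structures.
From mathcomp Require Import all_boot all_order all_algebra perm.
From mathcomp Require Import all_classical all_reals all_analysis.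
Set Implicit Arguments. Unset Strict Implicit. Unset Printing Implicit Defensive.
Import Order.TTheory GRing.Theory Num.Theory.
Local Open Scope ring_scope.
Local Open Scope classical_set_scope.

Section Defs.
Variable R : realType.
Variable K : nat.

Definition dist3 (H : R) (q w : R * R) : R :=
  Num.sqrt ((q.1 - w.1) ^+ 2 + (q.2 - w.2) ^+ 2 + H ^+ 2).

Definition gain (rho0 H : R) (q w : R * R) : R := rho0 / (dist3 H q w) ^+ 2.

Definition log2 (x : R) : R := ln x / ln 2.

Variables (w : 'I_K -> R * R) (H rho0 sigma2 rstar Pc : R)
          (E Pt : 'I_K -> R).

Definition feasibleP1 (zeta : R) (q : R * R) (p : 'I_K -> R)
    (pi : {perm 'I_K}) : Prop :=
  let d := fun k => dist3 H q (w k) in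
  let h := fun k => gain rho0 H q (w k) in
  (forall m : 'I_K,
     [/\ p (pi m) + Pc <= zeta * E (pi m),
         0 <= p (pi m) <= Pt (pi m) &
         log2 (1 + p (pi m) * h (pi m) /
               (\sum_(n : 'I_K | (m < n)%N) p (pi n) * h (pi n) + sigma2))
           >= rstar]) /\
  (forall m n : 'I_K, (m <= n)%N -> d (pi m) <= d (pi n)).

(* feasibility in (P2); alpha k j = 1 : device k decoded before device j *)
Definition feasibleP2 (zeta : R) (q : R * R) (p : 'I_K -> R)
    (alpha : 'I_K -> 'I_K -> R) : Prop :=
  let d := fun k => dist3 H q (w k) in
  let h := fun k => gain rho0 H q (w k) in
  (forall k : 'I_K,
     [/\ p k + Pc <= zeta * E k,
         0 <= p k <= Pt k &
         log2 (1 + p k * h k /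
               (\sum_(j : 'I_K | j != k) alpha k j * p j * h j + sigma2))
           >= rstar]) /\
  (forall k j : 'I_K, k != j ->
     [/\ d k > d j -> alpha k j = 0,
         d k < d j -> alpha k j = 1 &
         d k = d j -> alpha k j = 0 \/ alpha k j = 1]) /\
  (forall k : 'I_K, alpha k k = 0) /\
  (forall k j : 'I_K, k != j -> alpha k j + alpha j k = 1) /\
  (forall k j i : 'I_K, alpha k j + alpha j i - 1 <= alpha k i).

Definition optP1 : \bar R :=
  ereal_inf [set (zeta%:E) | zeta in
    [set z | exists q p pi, feasibleP1 z q p pi]].

Definition optP2 : \bar R :=
  ereal_inf [set (zeta%:E) | zeta in
    [set z | exists q p alpha, feasibleP2 z q p alpha]].

End Defs.

From HB Require Import structures.
From mathcomp Require Import all_boot all_order all_algebra perm.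
From mathcomp Require Import all_classical all_reals all_analysis.
From mathcomp Require Import lra.
Set Implicit Arguments. Unset Strict Implicit. Unset Printing Implicit Defensive.
Import Order.TTheory GRing.Theory Num.Theory.
Local Open Scope ring_scope.

(* The decoding-order variables of (P2) are exactly the indicators
   alpha k j = [pi^-1 k < pi^-1 j] of permutations pi.  Such an indicator
   satisfies the 0/1, antisymmetry and transitivity constraints, and turns the
   interference term of device pi m into the sum over the devices pi n, n > m.
   Conversely, a transitive tournament alpha is the indicator of the ranking
   k |-> #{j | alpha j k = 1}.  Under this correspondence the distance
   constraints of (P2) say exactly that d is nondecreasing along pi, so (P1)
   and (P2) have the same feasible values of zeta. *)

Lemma perm_sortedP disp (T : orderType disp) n (d : 'I_n -> T)
    (pi : {perm 'I_n}) :
  (forall m m' : 'I_n, (m <= m')%N -> (d (pi m) <= d (pi m'))%O) <->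
  (forall k j, (d k < d j)%O -> ((pi^-1)%g k < (pi^-1)%g j)%N).
Proof.
split=> hd k j.
- move=> dkj; rewrite ltnNge; apply: contraL dkj.
  by rewrite -leNgt => /hd; rewrite !permKV.
- move=> le_kj; rewrite leNgt; apply: contraL le_kj.
  by rewrite -ltnNge => /hd; rewrite !permK.
Qed.

Section DecodingOrder.
Variables (R : realDomainType) (n : nat).
Implicit Types (pi : {perm 'I_n}) (alpha : 'I_n -> 'I_n -> R) (d : 'I_n -> R).

Definition perm_before pi (k j : 'I_n) : R := ((pi^-1)%g k < (pi^-1)%g j)%N%:R.

Definition order_indicator alpha : Prop :=
  [/\ forall k j, alpha k j = 0 \/ alpha k j = 1,
      forall k, alpha k k = 0,
      forall k j, k != j -> alpha k j + alpha j k = 1 &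
      forall k j i, alpha k j + alpha j i - 1 <= alpha k i].

Definition order_respects d alpha : Prop :=
  forall k j, k != j ->
    [/\ d k > d j -> alpha k j = 0,
        d k < d j -> alpha k j = 1 &
        d k = d j -> alpha k j = 0 \/ alpha k j = 1].

Lemma perm_before_order_indicator pi : order_indicator (perm_before pi).
Proof.
rewrite /perm_before; split.
- by move=> k j; case: (_ < _)%N; [right|left].
- by move=> k; rewrite ltnn.
- move=> k j; rewrite -(inj_eq (@perm_inj _ (pi^-1)%g)) -val_eqE.
  by case: ltngtP => //= _ _; rewrite ?add0r ?addr0.
- move=> k j i; case: ltnP => kj; case: ltnP => ji; case: ltnP => ik /=; try lra.
  by have := leq_ltn_trans ik (ltn_trans kj ji); rewrite ltnn.
Qed.

Lemma sum_perm_before pi (F : 'I_n -> R) (m : 'I_n) :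
  \sum_(j | j != pi m) perm_before pi (pi m) j * F j =
  \sum_(i : 'I_n | (m < i)%N) F (pi i).
Proof.
rewrite [RHS](reindex_inj (h := (pi^-1)%g) perm_inj).
rewrite big_mkcond [RHS]big_mkcond /=; apply: eq_bigr => j _.
rewrite /perm_before permK permKV.
case: (eqVneq j (pi m)) => [->|_]; first by rewrite permK ltnn.
by case: (m < _)%N; rewrite ?mul1r ?mul0r.
Qed.

Lemma perm_before_respectsE d pi :
  order_respects d (perm_before pi) <->
  (forall k j, d k < d j -> ((pi^-1)%g k < (pi^-1)%g j)%N).
Proof.
rewrite /perm_before; split=> hd k j.
- move=> dkj; have neq_kj : k != j by apply: contraTneq dkj => ->; rewrite ltxx.
  have [_ /(_ dkj) + _] := hd k j neq_kj.
  by case: (_ < _)%N => // /eqP; rewrite eq_sym oner_eq0.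
- move=> _; split.
  + by move=> /hd /ltnW; rewrite leqNgt => /negbTE ->.
  + by move=> /hd ->.
  + by case: (_ < _)%N; [right|left].
Qed.

Lemma order_respects_01 d alpha :
  order_respects d alpha -> (forall k, alpha k k = 0) ->
  forall k j, alpha k j = 0 \/ alpha k j = 1.
Proof.
move=> hd diag k j; case: (eqVneq k j) => [->|neq_kj]; first by left.
have [gt lt eq] := hd k j neq_kj.
by case: (ltgtP (d k) (d j)) => [/lt|/gt|/eq]; [right|left|].
Qed.

Section Ranking.
Variable alpha : 'I_n -> 'I_n -> R.
Hypothesis halpha : order_indicator alpha.

Let rank k := #|[set j | alpha j k == 1]|.

Lemma order_indicator_total k j : k != j -> alpha k j = 1 \/ alpha j k = 1.
Proof.
have [a01 _ compl _] := halpha; move=> /compl.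
by case: (a01 k j) => ->; [rewrite add0r; right | left].
Qed.

Lemma rank_lt k j : alpha k j = 1 -> (rank k < rank j)%N.
Proof.
have [a01 diag _ trans] := halpha; move=> kj.
apply/proper_card/properP; split.
- apply/fintype.subsetP => i; rewrite !inE => /eqP ik; apply/eqP.
  have := trans i k j; rewrite ik kj addrK.
  by case: (a01 i j) => -> //; rewrite ler10.
- by exists k; rewrite !inE ?kj ?diag // eq_sym oner_eq0.
Qed.

Lemma rank_ltn k : (rank k < n)%N.
Proof.
have [_ diag _ _] := halpha.
rewrite -[n in (_ < n)%N]card_ord -cardsT; apply/proper_card/properP.
by split; [exact: finset.subsetT | exists k; rewrite !inE ?diag // eq_sym oner_eq0].
Qed.

Lemma rank_inj : injective (fun k => Ordinal (rank_ltn k)).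
Proof.
move=> k j /(congr1 val) /= eq_rank; apply/eqP/negPn/negP.
by case/order_indicator_total => /rank_lt; rewrite eq_rank ltnn.
Qed.

Lemma order_indicator_perm : exists pi, alpha = perm_before pi.
Proof.
have [_ diag compl _] := halpha.
exists (perm rank_inj)^-1%g; apply/funext => k; apply/funext => j.
rewrite /perm_before invgK !permE /=.
case: (eqVneq k j) => [->|neq_kj]; first by rewrite diag ltnn.
case: (order_indicator_total neq_kj) => [kj|jk]; first by rewrite kj rank_lt.
have -> : alpha k j = 0 by have := compl k j neq_kj; rewrite jk; lra.
by rewrite ltnNge ltnW ?rank_lt.
Qed.

End Ranking.

End DecodingOrder.

Arguments perm_before {R n} pi k j.

Section Feasibility.
Variables (R : realType) (K : nat) (w : 'I_K -> R * R).
Variables (H rho0 sigma2 rstar Pc : R) (E Pt : 'I_K -> R).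

Lemma feasibleP2_perm_before zeta q p pi :
  feasibleP2 w H rho0 sigma2 rstar Pc E Pt zeta q p (perm_before pi) <->
  feasibleP1 w H rho0 sigma2 rstar Pc E Pt zeta q p pi.
Proof.
rewrite /feasibleP1 /feasibleP2 /=.
have interferenceE m :
    \sum_(j | j != pi m) perm_before pi (pi m) j * p j * gain rho0 H q (w j) =
    \sum_(i : 'I_K | (m < i)%N) p (pi i) * gain rho0 H q (w (pi i)).
  by under eq_bigr do rewrite -mulrA; exact: sum_perm_before.
have orderE : order_respects (fun k => dist3 H q (w k)) (perm_before pi) <->
    (forall m m' : 'I_K, (m <= m')%N ->
       dist3 H q (w (pi m)) <= dist3 H q (w (pi m'))).
  exact: iff_trans (perm_before_respectsE _ _) (iff_sym (perm_sortedP _ _)).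
have [_ diag compl trans] := perm_before_order_indicator R pi.
split=> [[hpow [hresp _]] | [hpow hsort]]; split.
- by move=> m; rewrite -interferenceE; exact: hpow.
- exact: (proj1 orderE hresp).
- by move=> k; have := hpow ((pi^-1)%g k); rewrite -interferenceE permKV.
- by split; [exact: (proj2 orderE hsort) | split].
Qed.

Lemma feasibleP2_perm zeta q p alpha :
  feasibleP2 w H rho0 sigma2 rstar Pc E Pt zeta q p alpha ->
  exists pi, alpha = perm_before pi.
Proof.
move=> [_ [hresp [diag [compl trans]]]]; apply: order_indicator_perm.
by split=> //; exact: order_respects_01 hresp diag.
Qed.

End Feasibility.

Theorem proposition4 (R : realType) (K' : nat) (w : 'I_K'.+1 -> R * R)
    (H rho0 sigma2 rstar Pc : R) (E Pt : 'I_K'.+1 -> R)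
    (hH : 0 < H) (hrho0 : 0 < rho0) (hsigma2 : 0 < sigma2) (hrstar : 0 < rstar)
    (hPc : 0 <= Pc) (hE : forall k, 0 < E k) (hPt : forall k, 0 < Pt k) :
  optP1 w H rho0 sigma2 rstar Pc E Pt = optP2 w H rho0 sigma2 rstar Pc E Pt.
Proof.
rewrite /optP1 /optP2; congr (ereal_inf [set _%:E | _ in _]).
apply/funext => zeta; apply/propext; split=> [[q [p [pi]]] | [q [p [alpha hP2]]]].
- by move/feasibleP2_perm_before => hP2; exists q, p, (perm_before pi).
- have [pi alphaE] := feasibleP2_perm hP2; subst alpha.
  by exists q, p, pi; exact/feasibleP2_perm_before.
Qed.
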